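(* Let $E$ be a finite set and $\underline I=(I_\omega)_{\omega\in E}$ a family of non-empty finite sets. For any two causal orders $\Omega$ and $\Xi$ on $E$, $\Omega\le\Xi$ if and only if $\mathrm{ExtHist}(\Omega,\underline I)\supseteq\mathrm{ExtHist}(\Xi,\underline I)$.
   Context: A causal order $\Omega$ on $E$ is a preorder $\le_\Omega$ on $E$; $\Omega\le\Xi$ iff $\le_\Omega\subseteq\le_\Xi$. $\Lambda(\Omega)$ is the set of lowersets (subsets $U$ with $\xi\le_\Omega\omega\in U\Rightarrow\xi\in U$). $\mathrm{ExtHist}(\Omega,\underline I)=\bigcup_{U\in\Lambda(\Omega)}\prod_{\omega\in U}I_\omega$, i.e. all functions with domain a lowerset $U$ of $\Omega$ and values $f(\omega)\in I_\omega$. *)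

From mathcomp Require Import all_boot.
Set Implicit Arguments. Unset Strict Implicit. Unset Printing Implicit Defensive.

Definition causal_order (E : finType) (le : rel E) : Prop :=
  reflexive le /\ transitive le.

Definition order_le (E : finType) (leO leX : rel E) : Prop :=
  forall x y, leO x y -> leX x y.

Definition lowerset (E : finType) (le : rel E) (U : {set E}) : Prop :=
  forall xi om, le xi om -> om \in U -> xi \in U.

(* A partial function with domain U and values f w in I w is encoded as
   h : forall w, option (I w), defined (Some) exactly on its domain. *)
Definition pfun (E : finType) (I : E -> finType) := forall w : E, option (I w).

Definition pdom (E : finType) (I : E -> finType) (h : pfun I) : {set E} :=
  [set w | h w != None].

(* ExtHist(Omega, I) = union over lowersets U of prod_{w in U} I_w. *)
Definition ExtHist (E : finType) (I : E -> finType) (le : rel E) : pfun I -> Prop :=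
  fun h => lowerset le (pdom h).
Arguments ExtHist E I le h : clear implicits.

From mathcomp Require Import all_boot.
Set Implicit Arguments. Unset Strict Implicit. Unset Printing Implicit Defensive.

(* Since every [I w] is inhabited, every subset of [E] is the domain of some
   partial function, so [ExtHist] determines the family of lowersets of the
   order.  An order is in turn determined by its lowersets: [x <= y] holds iff
   [x] lies in the principal lowerset of [y]. *)

Section Lowersets.

Variable E : finType.
Implicit Types (le leO leX : rel E) (U : {set E}).

Lemma lowersetW leO leX U :
  order_le leO leX -> lowerset leX U -> lowerset leO U.
Proof. by move=> leOX lowU x y /leOX; apply: lowU. Qed.

Definition downset le y : {set E} := [set x | le x y].

Lemma downset_lowerset le y : transitive le -> lowerset le (downset le y).
Proof. by move=> trans_le x z le_xz; rewrite !inE; apply: trans_le. Qed.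

Lemma order_le_lowerset leO leX : reflexive leX -> transitive leX ->
  (forall U, lowerset leX U -> lowerset leO U) -> order_le leO leX.
Proof.
move=> refl_le trans_le lowXO x y le_xy.
have := lowXO _ (downset_lowerset (y:=y) trans_le) x y le_xy.
by rewrite !inE; apply.
Qed.

End Lowersets.

Section PartialFunctions.

Variables (E : finType) (I : E -> finType).
Hypothesis I_inhabited : forall w, inhabited (I w).

Definition pfun_on (U : {set E}) : pfun I :=
  fun w => if w \in U then [pick i : I w] else None.

Lemma pick_inhabited w : [pick i : I w] != None.
Proof. by case: (I_inhabited w) => i; case: pickP => // /(_ i). Qed.

Lemma pdom_pfun_on U : pdom (pfun_on U) = U.
Proof.
apply/setP => w; rewrite inE /pfun_on.
by case: (w \in U); rewrite ?pick_inhabited.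
Qed.

End PartialFunctions.

Theorem proposition5 (E : finType) (I : E -> finType)
    (hI : forall w : E, inhabited (I w))
    (leO leX : rel E) (hO : causal_order leO) (hX : causal_order leX) :
  order_le leO leX <->
  (forall h : pfun I, ExtHist E I leX h -> ExtHist E I leO h).
Proof.
(* Only [leX] needs to be a preorder. *)
split=> [leOX h | histXO]; first exact: lowersetW.
case: hX => refl_le trans_le; apply: order_le_lowerset => // U lowU.
by have := histXO (pfun_on I U); rewrite /ExtHist pdom_pfun_on //; apply.
Qed.
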